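(* Let $D$ be a digraph in $\mathcal D_{10,3}$ with exactly $33$ edges. Then for all $i,j\in\{10,9,8,7\}$ with $i>j$, $D$ contains the edge from $i$ to $j$.
   Context: For positive integers $v,m$, $\mathcal D_{v,m}$ is the class of all digraphs (without multiple edges) on the vertex set $\{v,v-1,\dots,1\}$ such that every edge $i\to j$ satisfies $i>j$, and $[i]^+\le m+[i]^-$ for every vertex $i$, where $[i]^+$ and $[i]^-$ denote the outdegree and indegree of $i$. *)

From mathcomp Require Import all_boot.
Set Implicit Arguments. Unset Strict Implicit. Unset Printing Implicit Defensive.

(* A digraph without multiple edges on the vertex set {v, v-1, ..., 1} is
   encoded by its edge set E : {set 'I_v * 'I_v}; the ordinal k : 'I_v
   stands for the vertex with label k+1 (so label order = ordinal order).
   The pair (i, j) \in E is the edge i -> j. *)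
Definition outdeg v (E : {set 'I_v * 'I_v}) (i : 'I_v) : nat :=
  #|[set j : 'I_v | (i, j) \in E]|.
Definition indeg v (E : {set 'I_v * 'I_v}) (i : 'I_v) : nat :=
  #|[set j : 'I_v | (j, i) \in E]|.

Definition in_D v m (E : {set 'I_v * 'I_v}) : Prop :=
  (forall i j : 'I_v, (i, j) \in E -> j < i) /\
  (forall i : 'I_v, outdeg E i <= m + indeg E i).

From mathcomp Require Import all_boot zify.

(* Split the vertices at a threshold k into a low part {i < k} and a high part
   {i >= k}. Edges go downwards, so every edge whose head is high has a high
   tail and lies inside the high part. Summing the degree condition over the
   high part therefore bounds the edges from high to low vertices by m times
   the size of the high part. Edges with a low tail lie among the 'C(k, 2)
   descending low pairs and the remaining ones among the 'C(v - k, 2)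
   descending high pairs, so #|E| <= 'C(k, 2) + m (v - k) + 'C(v - k, 2), and
   in case of equality every descending high pair is an edge. For v = 10,
   m = 3, k = 6 this bound is 15 + 12 + 6 = 33. *)

Set Implicit Arguments.
Unset Strict Implicit.
Unset Printing Implicit Defensive.

Lemma card_pairs_sum_fst v (R : rel 'I_v) :
  #|[set p : 'I_v * 'I_v | R p.1 p.2]| = \sum_i #|[set j | R i j]|.
Proof.
rewrite -sum1dep_card big_mkcond /= -(pair_bigA _ (fun i j => if R i j then 1 else 0)) /=.
by apply: eq_bigr => i _; rewrite -sum1dep_card [RHS]big_mkcond.
Qed.

Lemma card_pairs_sum_snd v (R : rel 'I_v) :
  #|[set p : 'I_v * 'I_v | R p.1 p.2]| = \sum_j #|[set i | R i j]|.
Proof.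
rewrite -sum1dep_card big_mkcond /= -(pair_bigA _ (fun i j => if R i j then 1 else 0)) /=.
by rewrite exchange_big; apply: eq_bigr => j _; rewrite -sum1dep_card [RHS]big_mkcond.
Qed.

Lemma card_ord_lt v i : i <= v -> #|[set j : 'I_v | j < i]| = i.
Proof.
move=> le_iv; rewrite -sum1dep_card -(big_ord_widen _ (fun=> 1) le_iv).
by rewrite sum1_card card_ord.
Qed.

Lemma card_ord_ge v k : k <= v -> #|[set i : 'I_v | k <= i]| = v - k.
Proof.
move=> le_kv; rewrite cardsCs card_ord -{2}(card_ord_lt le_kv).
by congr (v - _); apply: eq_card => i; rewrite !inE -ltnNge.
Qed.

Lemma card_low_pairs v k :
  k <= v -> #|[set p : 'I_v * 'I_v | p.2 < p.1 < k]| = 'C(k, 2).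
Proof.
move=> le_kv; rewrite (card_pairs_sum_fst (fun i j : 'I_v => j < i < k)).
rewrite -bin2_sum big_mkord (big_ord_widen _ (fun i => i) le_kv) [RHS]big_mkcond /=.
apply: eq_bigr => i _; case: ltnP => _.
  rewrite -{2}(card_ord_lt (ltnW (ltn_ord i))).
  by apply: eq_card => j; rewrite !inE andbT.
by apply: eq_card0 => j; rewrite !inE andbF.
Qed.

Lemma card_high_pairs v k :
  k <= v -> #|[set p : 'I_v * 'I_v | k <= p.2 < p.1]| = 'C(v - k, 2).
Proof.
move=> le_kv; rewrite -(card_low_pairs (leq_subr k v)).
pose flip (p : 'I_v * 'I_v) := (rev_ord p.2, rev_ord p.1).
have flipK : involutive flip by move=> [i j]; rewrite /flip /= !rev_ordK.
rewrite -(card_preimset _ (inv_inj flipK)); apply: eq_card => -[i j].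
by rewrite !inE /=; have := ltn_ord i; have := ltn_ord j; lia.
Qed.

Lemma card_edges_by_tail v k (E : {set 'I_v * 'I_v}) :
  #|E| = #|[set p in E | p.1 < k]| + #|[set p in E | k <= p.1]|.
Proof.
rewrite -(cardsID [set p : 'I_v * 'I_v | k <= p.1] E) addnC.
by congr (_ + _); apply: eq_card => p; rewrite !inE ?ltnNge // andbC.
Qed.

Section DegreeSums.

Variables (v : nat) (E : {set 'I_v * 'I_v}) (P : pred 'I_v).

Lemma sum_outdeg : \sum_(i | P i) outdeg E i = #|[set p in E | P p.1]|.
Proof.
have -> : [set p in E | P p.1] = [set p | P p.1 && ((p.1, p.2) \in E)].
  by apply/setP => -[i j]; rewrite !inE andbC.
rewrite (card_pairs_sum_fst (fun i j => P i && ((i, j) \in E))) big_mkcond /=.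
apply: eq_bigr => i _.
by case: (P i); rewrite ?set0 ?cards0 //; apply: eq_card => j; rewrite !inE.
Qed.

Lemma sum_indeg : \sum_(j | P j) indeg E j = #|[set p in E | P p.2]|.
Proof.
have -> : [set p in E | P p.2] = [set p | P p.2 && ((p.1, p.2) \in E)].
  by apply/setP => -[i j]; rewrite !inE andbC.
rewrite (card_pairs_sum_snd (fun i j => P j && ((i, j) \in E))) big_mkcond /=.
apply: eq_bigr => j _.
by case: (P j); rewrite ?set0 ?cards0 //; apply: eq_card => i; rewrite !inE.
Qed.

End DegreeSums.

Section ThresholdCut.

Variables (v m k : nat) (E : {set 'I_v * 'I_v}).
Hypotheses (E_in_D : in_D m E) (le_kv : k <= v).

Lemma card_high_tail_le :
  #|[set p in E | k <= p.1]| <= m * (v - k) + #|[set p in E | k <= p.2]|.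
Proof.
rewrite -(card_ord_ge le_kv) -(sum_outdeg _ (fun i => k <= i)).
rewrite -(sum_indeg _ (fun i => k <= i)) -sum1dep_card big_distrr /= -big_split /=.
by apply: leq_sum => i _; rewrite muln1; exact: E_in_D.2.
Qed.

Lemma low_tail_edges_sub :
  [set p in E | p.1 < k] \subset [set p : 'I_v * 'I_v | p.2 < p.1 < k].
Proof. by apply/subsetP => -[i j]; rewrite !inE /= => /andP[/E_in_D.1 -> ->]. Qed.

Lemma high_head_edges_sub :
  [set p in E | k <= p.2] \subset [set p : 'I_v * 'I_v | k <= p.2 < p.1].
Proof. by apply/subsetP => -[i j]; rewrite !inE /= => /andP[/E_in_D.1 -> ->]. Qed.

Lemma card_edges_le :
  #|E| <= 'C(k, 2) + m * (v - k) + #|[set p in E | k <= p.2]|.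
Proof.
rewrite (card_edges_by_tail k) -addnA -(card_low_pairs le_kv).
by rewrite leq_add ?subset_leq_card ?low_tail_edges_sub ?card_high_tail_le.
Qed.

Lemma high_pairs_sub_extremal :
  #|E| = 'C(k, 2) + m * (v - k) + 'C(v - k, 2) ->
  forall i j : 'I_v, k <= j -> j < i -> (i, j) \in E.
Proof.
move=> cardE i j le_kj lt_ji; apply: contraT => ijNE.
have : #|[set p in E | k <= p.2]| < 'C(v - k, 2).
  rewrite -(card_high_pairs le_kv); apply/proper_card/properP.
  split; first exact: high_head_edges_sub.
  by exists (i, j); rewrite !inE ?(negbTE ijNE) //= le_kj.
by rewrite ltnNge -(leq_add2l ('C(k, 2) + m * (v - k))) -cardE card_edges_le.
Qed.

End ThresholdCut.

Theorem lemma2 (E : {set 'I_10 * 'I_10}) :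
  in_D 3 E -> #|E| = 33 ->
  forall i j : 'I_10, 6 <= i -> 6 <= j -> j < i -> (i, j) \in E.
Proof.
move=> E_in_D cardE i j _.
by apply: (high_pairs_sub_extremal (k := 6) E_in_D) => //; rewrite cardE.
Qed.
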